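(* Let $\Omega$ be an infinite set, $G$ a subgroup of $S=\mathrm{Sym}(\Omega)$, and $\Gamma\subseteq\Omega$ a subset such that $|\Omega|^{|\Gamma|}\le|\Omega|$ (e.g., $\Gamma$ finite). Then $G_{(\Gamma)}\approx_{|\Omega|^+}G$.
   Context: $\mathrm{Sym}(\Omega)$ is the group of all permutations of $\Omega$. $G_{(\Gamma)}=\{g\in G:\gamma g=\gamma\ \forall\gamma\in\Gamma\}$. $|\Omega|^+$ is the successor cardinal of $|\Omega|$. For an infinite cardinal $\kappa$ and subgroups $G_1,G_2\le S$, $G_1\preccurlyeq_\kappa G_2$ means there exists $U\subseteq S$ with $|U|<\kappa$ and $G_1\le\langle G_2\cup U\rangle$; $G_1\approx_\kappa G_2$ means $G_1\preccurlyeq_\kappa G_2$ and $G_2\preccurlyeq_\kappa G_1$. *)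

Set Implicit Arguments.

Section Defs.
Variable Omega : Type.

Definition is_perm (f : Omega -> Omega) : Prop :=
  exists g : Omega -> Omega, (forall x, g (f x) = x) /\ (forall x, f (g x) = x).

Definition is_subgroup (G : (Omega -> Omega) -> Prop) : Prop :=
  (forall f, G f -> is_perm f) /\
  G (fun x => x) /\
  (forall f g, G f -> G g -> G (fun x => g (f x))) /\
  (forall f g, G f -> (forall x, g (f x) = x) -> (forall x, f (g x) = x) -> G g).

Definition gen (X : (Omega -> Omega) -> Prop) (f : Omega -> Omega) : Prop :=
  forall H, is_subgroup H -> (forall h, X h -> H h) -> H f.

Definition pstab (G : (Omega -> Omega) -> Prop) (Gamma : Omega -> Prop)
  (f : Omega -> Omega) : Prop :=
  G f /\ (forall x, Gamma x -> f x = x).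

Definition card_le_Omega (X : Type) (A : X -> Prop) : Prop :=
  exists i : {x : X | A x} -> Omega, forall a b, i a = i b -> a = b.

(* G1 <=_kappa G2 with kappa = |Omega|^+, i.e. |U| < |Omega|^+ iff |U| <= |Omega| *)
Definition prec_succ (G1 G2 : (Omega -> Omega) -> Prop) : Prop :=
  exists U : (Omega -> Omega) -> Prop,
    (forall u, U u -> is_perm u) /\
    card_le_Omega U /\
    (forall f, G1 f -> gen (fun h => G2 h \/ U h) f).

Definition approx_succ (G1 G2 : (Omega -> Omega) -> Prop) : Prop :=
  prec_succ G1 G2 /\ prec_succ G2 G1.

Definition infinite_type : Prop :=
  exists i : nat -> Omega, forall m n, i m = i n -> m = n.

Definition pow_le (Gamma : Omega -> Prop) : Prop :=
  exists i : ({x : Omega | Gamma x} -> Omega) -> Omega,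
    forall a b, i a = i b -> a = b.
End Defs.

From Stdlib Require Import ClassicalEpsilon FunctionalExtensionality ProofIrrelevance.

Set Implicit Arguments.

(* Two elements r, g of G lie in the same left coset of G_(Gamma) exactly
   when they agree on Gamma, so these cosets are indexed by restrictions to
   Gamma, i.e. by at most |Omega|^|Gamma| <= |Omega| maps Gamma -> Omega.
   A transversal T of these cosets therefore has size at most |Omega|, and
   every g in G factors as r * h with r in T and h in G_(Gamma), whence
   G <= <G_(Gamma), T>.  The converse G_(Gamma) <= G needs no extra
   generators.  Neither direction uses that Omega is infinite. *)

Section GeneratedSubgroup.
Variables (Omega : Type) (X : (Omega -> Omega) -> Prop).

Lemma gen_generator f : X f -> gen X f.
Proof. intros Xf H _ HX. exact (HX f Xf). Qed.

Lemma gen_comp f g : gen X f -> gen X g -> gen X (fun x => g (f x)).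
Proof.
  intros genf geng H HH HX.
  pose proof HH as (_ & _ & H_comp & _).
  apply H_comp; [apply genf | apply geng]; assumption.
Qed.

End GeneratedSubgroup.

Section Comparison.
Variable Omega : Type.

Lemma card_le_Omega_empty (X : Type) : card_le_Omega Omega (fun _ : X => False).
Proof. exists (fun a => False_rect Omega (proj2_sig a)). intros [a []]. Qed.

Lemma card_le_Omega_inj_on (X Y : Type) (A : X -> Prop) (f : X -> Y)
  (j : Y -> Omega) :
  (forall a b, A a -> A b -> f a = f b -> a = b) ->
  (forall y y', j y = j y' -> y = y') ->
  card_le_Omega Omega A.
Proof.
  intros f_inj j_inj. exists (fun a => j (f (proj1_sig a))).
  intros [a Aa] [b Ab] E. simpl in E.
  destruct (f_inj a b Aa Ab (j_inj _ _ E)).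
  f_equal. apply proof_irrelevance.
Qed.

Lemma prec_succ_of_sub (G1 G2 : (Omega -> Omega) -> Prop) :
  (forall f, G1 f -> G2 f) -> prec_succ G1 G2.
Proof.
  intros G12. exists (fun _ => False).
  split; [tauto | split; [apply card_le_Omega_empty |]].
  intros f G1f. apply gen_generator. left. exact (G12 f G1f).
Qed.

End Comparison.

Section Transversal.
Variables (Omega : Type) (G : (Omega -> Omega) -> Prop) (Gamma : Omega -> Prop).
Hypothesis G_subgroup : is_subgroup G.

Definition restr (u : Omega -> Omega) : {x : Omega | Gamma x} -> Omega :=
  fun x => u (proj1_sig x).

Lemma subgroup_inv r :
  G r -> exists rinv, G rinv /\ (forall x, rinv (r x) = x) /\ (forall x, r (rinv x) = x).
Proof.
  destruct G_subgroup as (G_perm & _ & _ & G_inv).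
  intros Gr. destruct (G_perm r Gr) as (rinv & rinvK & rK).
  exists rinv. exact (conj (G_inv r rinv Gr rinvK rK) (conj rinvK rK)).
Qed.

Lemma pstab_of_restr_eq r rinv g :
  G rinv -> G g -> (forall x, rinv (r x) = x) -> restr r = restr g ->
  pstab G Gamma (fun x => rinv (g x)).
Proof.
  destruct G_subgroup as (_ & _ & G_comp & _).
  intros Grinv Gg rinvK Erg. split; [exact (G_comp g rinv Gg Grinv) |].
  intros x Gx.
  assert (Erg_x : r x = g x) by exact (f_equal (fun v => v (exist _ x Gx)) Erg).
  rewrite <- Erg_x. apply rinvK.
Qed.

Definition transversal_rep (r : {x : Omega | Gamma x} -> Omega) : Omega -> Omega :=
  epsilon (inhabits (fun x : Omega => x)) (fun v => G v /\ restr v = r).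

Definition transversal (u : Omega -> Omega) : Prop :=
  G u /\ u = transversal_rep (restr u).

Lemma transversal_rep_spec g :
  G g -> G (transversal_rep (restr g)) /\ restr (transversal_rep (restr g)) = restr g.
Proof.
  intros Gg. apply (epsilon_spec _ (fun v => G v /\ restr v = restr g)).
  exists g. split; [exact Gg | reflexivity].
Qed.

Lemma transversal_rep_mem g : G g -> transversal (transversal_rep (restr g)).
Proof.
  intros Gg. destruct (transversal_rep_spec Gg) as [Grep Erep].
  split; [exact Grep | rewrite Erep; reflexivity].
Qed.

Lemma card_transversal : pow_le Gamma -> card_le_Omega Omega transversal.
Proof.
  intros [j j_inj]. apply (card_le_Omega_inj_on transversal restr j); [| exact j_inj].
  intros u v [_ Eu] [_ Ev] E. rewrite Eu, Ev, E. reflexivity.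
Qed.

Lemma subgroup_gen_pstab_transversal g :
  G g -> gen (fun h => pstab G Gamma h \/ transversal h) g.
Proof.
  intros Gg. set (r := transversal_rep (restr g)).
  destruct (transversal_rep_spec Gg) as [Gr Erg]. fold r in Gr, Erg.
  destruct (subgroup_inv Gr) as (rinv & Grinv & rinvK & rK).
  replace g with (fun x => r (rinv (g x))) by (apply functional_extensionality; intros x; apply rK).
  apply gen_comp; apply gen_generator.
  - left. exact (pstab_of_restr_eq Grinv Gg rinvK Erg).
  - right. exact (transversal_rep_mem Gg).
Qed.

End Transversal.

Theorem lemma2p2 (Omega : Type) (G : (Omega -> Omega) -> Prop)
  (Gamma : Omega -> Prop) :
  infinite_type Omega ->
  is_subgroup G ->
  pow_le Gamma ->
  approx_succ (pstab G Gamma) G.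
Proof.
  intros _ G_subgroup Gamma_pow. split.
  - apply prec_succ_of_sub. intros f [Gf _]. exact Gf.
  - exists (transversal G Gamma). split; [| split].
    + intros u [Gu _]. exact (proj1 G_subgroup u Gu).
    + exact (card_transversal G Gamma_pow).
    + intros g Gg. exact (subgroup_gen_pstab_transversal G_subgroup g Gg).
Qed.
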